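(* Let $(J,F,Y)$ be a pullback triple and let $Y_0\subset Y$ be a restriction of $Y$. Then $(J,F,Y_0)$ is a pullback triple if and only if $\mathcal D(Y_0)$ is a core of $Y$. In this case $(J,F,Y)$ and $(J,F,Y_0)$ are equivalent.
   Context: For Hilbert spaces $\mathcal H,\mathcal X,\mathcal E$, a pullback triple $(J,F,Y)$ consists of $J:\mathcal X\to\mathcal H$, $F:\mathcal X\to\mathcal E$ bounded with dense range, $Y:\mathcal H\to\mathcal X$ a completion operator (densely defined injective linear map with dense range), with $\|u\|_{\mathcal X}^2=\|Ju\|^2+\|Fu\|_{\mathcal E}^2$ for all $u\in\mathcal X$ and $JYf=f$ for $f\in\mathcal D(Y)$. A subspace $\mathcal D_0\subset\mathcal D(Y)$ is a core of $Y$ if for every $f\in\mathcal D(Y)$ there are $f_j\in\mathcal D_0$ with $f_j\to f$ and $Yf_j\to Yf$. Two pullback triples $(J_j,F_j,Y_j)$ with spaces $\mathcal H_j,\mathcal X_j,\mathcal E_j$ are equivalent if there are unitaries $W_{\mathcal H},W_{\mathcal X},W_{\mathcal E}$ with $W_{\mathcal H}J_1=J_2W_{\mathcal X}$ and $W_{\mathcal E}F_1=F_2W_{\mathcal X}$. *)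

From HB Require Import structures.
From mathcomp Require Import all_boot all_order all_algebra.
From mathcomp Require Import all_classical all_reals.
From mathcomp Require Import topology normedtype.
From mathcomp Require Import complex.
Set Implicit Arguments. Unset Strict Implicit. Unset Printing Implicit Defensive.
Import Order.TTheory GRing.Theory Num.Theory.
Import numFieldNormedType.Exports.
Local Open Scope classical_set_scope.
Local Open Scope ring_scope.

Section Defs.
Variable R : realType.
Local Notation C := R[i].

Definition inner_product_of (V : normedModType C) (ip : V -> V -> C) : Prop :=
  [/\ forall (a : C) (x y z : V), ip (a *: x + y) z = a * ip x z + ip y z,
      forall x y : V, ip y x = (ip x y)^*%C,
      forall x : V, 0 <= ip x x
    & forall x : V, `|x| ^+ 2 = ip x x].

Definition hilbert (V : completeNormedModType C) : Prop :=
  exists ip : V -> V -> C, inner_product_of ip.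

Definition dense_set (V : normedModType C) (A : set V) : Prop :=
  closure A = setT.

Definition bounded_dense_range (U V : normedModType C) (T : {linear U -> V}) : Prop :=
  continuous T /\ dense_set (range T).

(* A (partially defined) linear operator Y : H -> X is given by a domain D
   and a function Y (only its values on D matter). *)
Definition linear_subspace (V : normedModType C) (D : set V) : Prop :=
  [/\ D 0, forall x y, D x -> D y -> D (x + y)
    & forall (a : C) x, D x -> D (a *: x)].

Definition linear_on (U V : normedModType C) (D : set U) (Y : U -> V) : Prop :=
  linear_subspace D /\
  (forall (a : C) x y, D x -> D y -> Y (a *: x + y) = a *: Y x + Y y).

Definition completion_operator (U V : normedModType C) (D : set U) (Y : U -> V) : Prop :=
  [/\ linear_on D Y, dense_set D, {in D &, injective Y} & dense_set (Y @` D)].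

Definition pullback_triple (H X E : normedModType C)
  (J : {linear X -> H}) (F : {linear X -> E}) (D : set H) (Y : H -> X) : Prop :=
  [/\ bounded_dense_range J, bounded_dense_range F, completion_operator D Y,
      forall u : X, `|u| ^+ 2 = `|J u| ^+ 2 + `|F u| ^+ 2
    & forall f, D f -> J (Y f) = f].

Definition restriction_of (U V : normedModType C)
  (D0 : set U) (Y0 : U -> V) (D : set U) (Y : U -> V) : Prop :=
  D0 `<=` D /\ (forall f, D0 f -> Y0 f = Y f).

Definition core_of (U V : normedModType C) (D0 : set U) (D : set U) (Y : U -> V) : Prop :=
  D0 `<=` D /\
  forall f, D f -> exists fj : nat -> U,
    (forall j, D0 (fj j)) /\ fj @ \oo --> f /\ (Y \o fj) @ \oo --> Y f.

Definition unitary (U V : normedModType C) (W : {linear U -> V}) : Prop :=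
  (forall x, `|W x| = `|x|) /\ (forall y, exists x, W x = y).

Definition equivalent_triples (H1 X1 E1 H2 X2 E2 : normedModType C)
  (J1 : {linear X1 -> H1}) (F1 : {linear X1 -> E1})
  (J2 : {linear X2 -> H2}) (F2 : {linear X2 -> E2}) : Prop :=
  exists (WH : {linear H1 -> H2}) (WX : {linear X1 -> X2}) (WE : {linear E1 -> E2}),
    [/\ unitary WH, unitary WX, unitary WE,
        forall u, WH (J1 u) = J2 (WX u)
      & forall u, WE (F1 u) = F2 (WX u)].

End Defs.

From HB Require Import structures.
From mathcomp Require Import all_boot all_order all_algebra.
From mathcomp Require Import all_classical all_reals.
From mathcomp Require Import interval_inference topology normedtype.
From mathcomp Require Import complex.
Set Implicit Arguments. Unset Strict Implicit. Unset Printing Implicit Defensive.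
Import Order.TTheory GRing.Theory Num.Theory.
Import numFieldNormedType.Exports.
Local Open Scope classical_set_scope.
Local Open Scope ring_scope.

(* A restriction Y0 of Y inherits linearity, injectivity and J Y0 = id, so
   (J, F, Y0) is a pullback triple exactly when D(Y0) and Y0(D(Y0)) are dense.
   A core gives both densities, since D(Y0) is dense in D(Y) and Y0(D(Y0)) in
   Y(D(Y)).  Conversely, if Y0(D(Y0)) is dense then for f in D(Y) pick f_j in
   D(Y0) with Y f_j --> Y f; applying the bounded J gives f_j = J Y f_j --> J Y f
   = f.  As J and F are unchanged, the identities witness the equivalence. *)

(* [near_infty_natSinv_lt] needs an archiRealFieldType; a positive e in R[i]
   is real, which reduces the claim to it. *)
Lemma near_infty_natSinv_ltC (R : realType) (e : R[i]) : 0 < e ->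
  \forall n \near \oo, (n.+1%:R^-1 : R[i]) < e.
Proof.
case: e => a b; rewrite ltcE /= => /andP[/eqP -> a_gt0].
have [n _ nK] := near_infty_natSinv_lt (PosNum a_gt0).
exists n => // m /nK /= m_lt.
rewrite -(rmorph_nat (real_complex R)) -rmorphV ?unitfE ?pnatr_eq0 //.
by rewrite -[_ < _]/((_%:C)%C < a%:C)%C ltcR.
Qed.

Section SequentialClosure.
Variables (R : realType) (V : normedModType R[i]).

Lemma closure_seqP (A : set V) (x : V) :
  closure A x <-> exists u : nat -> V, (forall n, A (u n)) /\ u @ \oo --> x.
Proof.
split=> [clAx | [u [Au ux]]].
  have /choice[u Hu] : forall n : nat, exists y, A y /\ `|x - y| < n.+1%:R^-1.
    move=> n; have /clAx[y [Ay xy]] : nbhs x (ball x (n.+1%:R^-1 : R[i])).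
      by apply: nbhsx_ballx; rewrite invr_gt0 ltr0n.
    by exists y; split=> //; move: xy; rewrite -ball_normE.
  exists u; split=> [n|]; first by case: (Hu n).
  apply/cvgrPdist_lt => e e_gt0.
  move: (near_infty_natSinv_ltC e_gt0); apply: filterS => n.
  exact/lt_trans/(proj2 (Hu n)).
apply: (@closed_cvg nat V \oo _ u _ (@closed_closure V A) _ x ux).
by apply: nearW => n; apply: subset_closure.
Qed.

Lemma dense_subset_closure (A B : set V) :
  dense_set A -> A `<=` closure B -> dense_set B.
Proof.
move=> dA AB; apply/seteqP; split=> // x _.
rewrite (closure_id (closure B)).1; last exact: closed_closure.
by apply: (closureS AB); rewrite dA.
Qed.

End SequentialClosure.

Section Restriction.
Variables (R : realType) (U V : normedModType R[i]).
Variables (D D0 : set U) (Y Y0 : U -> V).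
Hypothesis restrY : restriction_of D0 Y0 D Y.

Lemma linear_on_restriction :
  linear_subspace D0 -> linear_on D Y -> linear_on D0 Y0.
Proof.
case: restrY => sD0 Y0E lsD0 [_ linY]; split=> // a x y D0x D0y.
have D0axy : D0 (a *: x + y) by case: lsD0 => _ D0D D0Z; apply/D0D/D0y/D0Z.
by rewrite !Y0E // linY //; apply: sD0.
Qed.

Lemma injective_restriction :
  {in D &, injective Y} -> {in D0 &, injective Y0}.
Proof.
case: restrY => sD0 Y0E injY x y; rewrite !inE => D0x D0y.
by rewrite !Y0E // => /injY; apply; rewrite inE; apply: sD0.
Qed.

Lemma core_dense_domain : core_of D0 D Y -> dense_set D -> dense_set D0.
Proof.
move=> [_ core] dD; apply: (dense_subset_closure dD) => f Df.
have [fj [D0fj [fjf _]]] := core f Df.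
by apply/closure_seqP; exists fj.
Qed.

Lemma core_dense_range :
  core_of D0 D Y -> dense_set (Y @` D) -> dense_set (Y0 @` D0).
Proof.
move=> [_ core] dYD; apply: (dense_subset_closure dYD) => _ [f Df <-].
have [fj [D0fj [_ Yfjf]]] := core f Df.
apply/closure_seqP; exists (Y \o fj); split=> // n.
by exists (fj n); rewrite ?restrY.2.
Qed.

Lemma completion_operator_restriction :
  linear_subspace D0 -> core_of D0 D Y ->
  completion_operator D Y -> completion_operator D0 Y0.
Proof.
move=> lsD0 core [linY dD injY dYD]; split.
- exact: linear_on_restriction.
- exact: core_dense_domain.
- exact: injective_restriction.
- exact: core_dense_range.
Qed.

End Restriction.

Section PullbackRestriction.
Variables (R : realType) (H X E : normedModType R[i]).
Variables (J : {linear X -> H}) (F : {linear X -> E}).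
Variables (D D0 : set H) (Y Y0 : H -> X).
Hypothesis restrY : restriction_of D0 Y0 D Y.

Lemma pullback_triple_restriction :
  pullback_triple J F D Y -> linear_subspace D0 -> core_of D0 D Y ->
  pullback_triple J F D0 Y0.
Proof.
move=> [bJ bF cY nrm JY] lsD0 core; split => //.
  exact: completion_operator_restriction restrY lsD0 core cY.
by move=> f D0f; rewrite restrY.2 // JY //; apply: restrY.1.
Qed.

Lemma core_of_pullback_restriction :
  pullback_triple J F D Y -> pullback_triple J F D0 Y0 -> core_of D0 D Y.
Proof.
move=> [[contJ _] _ _ _ JY] [_ _ [_ _ _ dY0D0] _ JY0]; split=> [|f Df].
  exact: restrY.1.
have /closure_seqP[u [Au uYf]] : closure (Y0 @` D0) (Y f) by rewrite dY0D0.
have /choice[fj fjP] : forall n, exists g, D0 g /\ Y0 g = u n.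
  by move=> n; case: (Au n) => g D0g <-; exists g.
have Yfj : Y \o fj = u.
  by apply: funext => n /=; case: (fjP n) => D0fj <-; rewrite restrY.2.
have fjE : fj = J \o u.
  by apply: funext => n /=; case: (fjP n) => D0fj <-; rewrite JY0.
exists fj; split=> [n|]; first by case: (fjP n).
rewrite Yfj fjE -[X in _ --> X](JY f Df); split=> //.
exact: cvg_comp uYf (contJ _).
Qed.

End PullbackRestriction.

Lemma equivalent_triples_refl (R : realType) (H X E : normedModType R[i])
  (J : {linear X -> H}) (F : {linear X -> E}) : equivalent_triples J F J F.
Proof.
have unitary_id (V : normedModType R[i]) : unitary (idfun : {linear V -> V}).
  by split=> // y; exists y.
by exists idfun, idfun, idfun; split.
Qed.

Theorem mainTheorem5 (R : realType) (H X E : completeNormedModType R[i])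
  (hH : hilbert H) (hX : hilbert X) (hE : hilbert E)
  (J : {linear X -> H}) (F : {linear X -> E})
  (D : set H) (Y : H -> X) (D0 : set H) (Y0 : H -> X) :
  pullback_triple J F D Y ->
  linear_subspace D0 ->
  restriction_of D0 Y0 D Y ->
  (pullback_triple J F D0 Y0 <-> core_of D0 D Y) /\
  (pullback_triple J F D0 Y0 -> equivalent_triples J F J F).
Proof.
move=> pbY lsD0 restrY; split; last by move=> _; apply: equivalent_triples_refl.
split; first exact: core_of_pullback_restriction.
exact: pullback_triple_restriction.
Qed.
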